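(* Let $\mathcal{P}$ be a locally finite poset, $R$ a commutative ring, and $f,g,r,s\in\mathbb{I}(\mathcal{P},R)$ such that $f(b,b)\,g(a,a)=1$ for all $a,b\in\mathcal{P}$. Then $$(f\Diamond g)\triangleright(r\Diamond s)=(f*r)\Diamond(s*g).$$
   Context: $\mathcal{F}l^2(\mathcal{P})=\{(x,y):x\le y\}$, $\mathcal{F}l^3(\mathcal{P})=\{(x,y,z):x\le y\le z\}$. $\mathbb{I}(\mathcal{P},R)$ is the set of functions $\mathcal{F}l^2(\mathcal{P})\to R$ with convolution $(f*g)(x,y)=\sum_{x\le a\le y}f(x,a)g(a,y)$. For $f,g\in\mathbb{I}(\mathcal{P},R)$, $f\Diamond g:\mathcal{F}l^3(\mathcal{P})\to R$ is $(f\Diamond g)(x,y,z)=f(x,y)\,g(y,z)$. For functions $F,G:\mathcal{F}l^3(\mathcal{P})\to R$, $(F\triangleright G)(x,y,z)=\sum_{x\le a\le y\le b\le z}F(x,a,a)\,G(a,y,b)\,F(b,b,z)$ (sum over $a,b\in\mathcal{P}$). *)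

From HB Require Import structures.
From mathcomp Require Import all_boot all_order all_algebra.
Set Implicit Arguments. Unset Strict Implicit. Unset Printing Implicit Defensive.
Import Order.TTheory GRing.Theory.
Local Open Scope ring_scope.
Local Open Scope order_scope.

Record locally_finite (d : Order.disp_t) (P : porderType d) := LocFin {
  lf_itv : P -> P -> seq P;
  lf_uniq : forall x y, uniq (lf_itv x y);
  lf_mem : forall x y z, (z \in lf_itv x y) = (x <= z <= y)
}.

Section Incidence.
Variables (d : Order.disp_t) (P : porderType d) (L : locally_finite P)
  (R : comPzRingType).

(* Elements of I(P,R): functions Fl^2(P) -> R, represented as P -> P -> R
   (values at pairs with ~ x <= y are irrelevant). *)
Definition conv (f g : P -> P -> R) : P -> P -> R :=
  fun x y => (\sum_(a <- lf_itv L x y) f x a * g a y)%R.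

Definition diamond (f g : P -> P -> R) : P -> P -> P -> R :=
  fun x y z => (f x y * g y z)%R.

Definition tright (F G : P -> P -> P -> R) : P -> P -> P -> R :=
  fun x y z => (\sum_(a <- lf_itv L x y) \sum_(b <- lf_itv L y z)
                  F x a a * G a y b * F b b z)%R.

End Incidence.

From HB Require Import structures.
From mathcomp Require Import all_boot all_order all_algebra.
From mathcomp Require Import ring.
Import Order.TTheory GRing.Theory.
Local Open Scope ring_scope.

Section DiamondConvolution.
Variables (d : Order.disp_t) (P : porderType d) (L : locally_finite P)
  (R : comPzRingType).
Implicit Types (f g r s : P -> P -> R) (x y z a b : P).

Lemma diamond_conv f r s g x y z :
  diamond (conv L f r) (conv L s g) x y z
  = \sum_(a <- lf_itv L x y) \sum_(b <- lf_itv L y z)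
      f x a * r a y * (s y b * g b z).
Proof. exact: big_distrlr. Qed.

Lemma diamond_tright_term f g r s x y z a b :
  diamond f g x a a * diamond r s a y b * diamond f g b b z
  = f x a * r a y * (s y b * g b z) * (f b b * g a a).
Proof. by rewrite /diamond; ring. Qed.

End DiamondConvolution.

Theorem proposition4p1 (d : Order.disp_t) (P : porderType d)
  (L : locally_finite P) (R : comPzRingType) (f g r s : P -> P -> R)
  (hfg : forall a b : P, f b b * g a a = 1) :
  forall x y z : P, (x <= y)%O -> (y <= z)%O ->
    tright L (diamond f g) (diamond r s) x y z
    = diamond (conv L f r) (conv L s g) x y z.
Proof.
(* The identity holds term by term. *)
move=> x y z _ _.
rewrite diamond_conv /tright.
apply: eq_bigr => a _; apply: eq_bigr => b _.
by rewrite diamond_tright_term hfg mulr1.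
Qed.
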